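(* Consider the mechanism MT-DM-L described in the context, run on any input (graph, tasks, diffusion parameters, qualities, registered users $V_R$ with bids $B_i=(T_i,b_i)$, budget $D$), with the marginal gains computed exactly from $f$. Then every winner $v_i\in S$ receives a payment $p_i\ge b_i$. Consequently MT-DM-L is individually rational: if a winning user bids truthfully ($b_i=c_i$, its true cost), its utility $u_i=p_i-c_i$ is nonnegative.
   Context: Setting: directed graph $G=(V,E)$; tasks $T=\{t_1,\dots,t_{n_T}\}$; for each $t_j$ edge probabilities $W^j=\{w^j_{uv}\}$; location map $\mathcal{L}:V\to\{a_1,\dots,a_{n_A}\}$; qualities $q_j^k\ge0$. Registered users $V_R\subseteq V$; user $v_i$ submits $B_i=(T_i,b_i)$ with $T_i\subseteq T$ and bid $b_i>0$, and has private true cost $c_i$. For $S\subseteq V_R$, $S^j=\{v_i\in S:t_j\in T_i\}$ and $f(S)=\frac{1}{n_T}\sum_{j}\sum_g\Pr[g;W^j]\sum_{v\in I_g(S^j)}q_j^{\mathcal{L}(v)}$, where $g$ ranges over realizations of $W^j$ (each edge kept independently with probability $w^j_{uv}$) and $I_g(A)$ is the set of nodes reachable from $A$ in $g$. Write $f(v|S)=f(S\cup\{v\})-f(S)$. Mechanism MT-DM-L. Winner selection: $S_0=\emptyset$, $sum=0$, $i=0$; while $S_i\ne V_R$: pick $v\in\arg\max_{v_k\in V_R\setminus S_i}f(v_k|S_i)/b_k$; if $sum+b_v>D$ stop; else $S_{i+1}=S_i\cup\{v\}$, $sum\mathrel{+}=b_v$, $i\mathrel{+}=1$. Output $S=S_i$.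 Payment for each $v_i\in S$: let $V_{R:-i}=V_R\setminus\{v_i\}$; set $H_0=\emptyset$, $sum=0$, $l=0$, $p_i=-\infty$; while $H_l\ne V_{R:-i}$: pick $v_{i_{l+1}}\in\arg\max_{v\in V_{R:-i}\setminus H_l}f(v|H_l)/b_v$; $H_{l+1}=H_l\cup\{v_{i_{l+1}}\}$; $sum\mathrel{+}=b_{i_{l+1}}$; $p_i\leftarrow\max\{p_i,\ b_{i_{l+1}}\cdot f(v_i|H_l)/f(v_{i_{l+1}}|H_l)\}$; $l\mathrel{+}=1$; if $sum+b_i>D$ stop the loop. After the loop, if $sum+b_i\le D$ set $p_i\leftarrow\max\{p_i,D-sum\}$. Utility of a winner is $u_i=p_i-c_i$; of a loser, $0$. *)

From mathcomp Require Import all_boot all_order all_algebra.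
Set Implicit Arguments. Unset Strict Implicit. Unset Printing Implicit Defensive.
Import Order.TTheory GRing.Theory Num.Theory.
Local Open Scope ring_scope.

Record mt_input (R : realFieldType) (V A : finType) (nT : nat) := MtInput {
  edge   : rel V;
  w      : 'I_nT -> V -> V -> R;
  loc    : V -> A;
  qual   : 'I_nT -> A -> R;
  VR     : {set V};
  tasks  : V -> {set 'I_nT};
  bid    : V -> R;
  budget : R
}.

Section MTDML.
Variables (R : realFieldType) (V A : finType) (nT : nat).
Variable I : mt_input R V A nT.

Definition Eset : {set V * V} := [set e | edge I e.1 e.2].

Definition prg (j : 'I_nT) (g : {set V * V}) : R :=
  \prod_(e in Eset) (if e \in g then w I j e.1 e.2 else 1 - w I j e.1 e.2).

Definition reach (g : {set V * V}) (S : {set V}) : {set V} :=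
  [set v | [exists u in S, connect (fun x y => (x, y) \in g) u v]].

Definition Sj (S : {set V}) (j : 'I_nT) : {set V} :=
  [set v in S | j \in tasks I v].

Definition f (S : {set V}) : R :=
  (nT%:R)^-1 * \sum_(j < nT) \sum_(g in powerset Eset)
     prg j g * \sum_(v in reach g (Sj S j)) qual I j (loc I v).

Definition marg (v : V) (S : {set V}) : R := f (v |: S) - f S.

(* argmax with a fixed deterministic tie-breaking rule: the first maximizer
   in the enumeration order of V *)
Definition pickmax (C : {set V}) (F : V -> R) : option V :=
  [pick v in C | [forall u in C, F u <= F v]].

(* winner selection loop (fuel #|VR| suffices: each step adds a user) *)
Fixpoint win_loop (n : nat) (S : {set V}) (sum : R) : {set V} :=
  match n with
  | 0 => S
  | n'.+1 =>
    if S == VR I then S else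
    match pickmax (VR I :\: S) (fun v => marg v S / bid I v) with
    | None => S
    | Some v => if sum + bid I v > budget I then S
                else win_loop n' (v |: S) (sum + bid I v)
    end
  end.

Definition winners : {set V} := win_loop #|VR I| set0 0.

(* payment loop for user vi: returns the executed steps (v_{i_{l+1}}, H_l)
   and the final value of sum *)
Fixpoint pay_loop (vi : V) (n : nat) (H : {set V}) (sum : R)
  : seq (V * {set V}) * R :=
  match n with
  | 0 => ([::], sum)
  | n'.+1 =>
    if H == VR I :\ vi then ([::], sum) else
    match pickmax ((VR I :\ vi) :\: H) (fun v => marg v H / bid I v) with
    | None => ([::], sum)
    | Some v =>
      let sum' := sum + bid I v in
      if sum' + bid I vi > budget I then ([:: (v, H)], sum')
      else let r := pay_loop vi n' (v |: H) sum' in ((v, H) :: r.1, r.2)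
    end
  end.

Definition pay_run (vi : V) := pay_loop vi #|VR I| set0 0.

(* max with -oo represented by None *)
Definition omax (x : R) (o : option R) : option R :=
  Some (match o with Some y => Num.max x y | None => x end).

Definition cand (vi : V) (st : V * {set V}) : R :=
  bid I st.1 * marg vi st.2 / marg st.1 st.2.

Definition payment (vi : V) : option R :=
  let r := pay_run vi in
  foldr (fun st acc => omax (cand vi st) acc)
        (if r.2 + bid I vi <= budget I then Some (budget I - r.2) else None)
        r.1.

(* the payment formula is well defined: every denominator
   f(v_{i_{l+1}} | H_l) occurring in the executed payment loop is nonzero *)
Definition pay_welldef (vi : V) : bool :=
  all (fun st : V * {set V} => marg st.1 st.2 != 0) (pay_run vi).1.

End MTDML.

From mathcomp Require Import all_boot all_order all_algebra.
Set Implicit Arguments. Unset Strict Implicit. Unset Printing Implicit Defensive.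
Import Order.TTheory GRing.Theory Num.Theory.
Local Open Scope ring_scope.

(* The payment loop for a winner v_i replays the winner-selection loop with v_i
   removed. As long as the winner loop picks some v <> v_i, the payment loop picks
   the same v (removing a non-chosen candidate does not change the first maximizer)
   with the same running sum, and cannot stop early since v_i is still affordable
   afterwards. At the step where the winner loop, with current set H and
   sum + b_i <= D, picks v_i, the payment loop either ends, contributing D - sum >= b_i, or
   picks some v' in V_R \ H; as v_i maximized f(.|H)/b over that set, the candidate
   b_{v'} f(v_i|H) / f(v'|H) is at least b_i. Since p_i is the maximum of all
   candidates and the final term, p_i >= b_i. *)

Lemma ler_sum_subset (R : numDomainType) (T : finType) (A B : {set T}) (F : T -> R) :
  (forall x, 0 <= F x) -> A \subset B -> \sum_(x in A) F x <= \sum_(x in B) F x.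
Proof.
by move=> F_ge0 AB; rewrite [leRHS](big_setID A) /= (setIidPr AB) lerDl sumr_ge0.
Qed.

Lemma pick_predD1 (T : finType) (P : pred T) x v :
  [pick y | P y] = Some v -> v != x -> [pick y | (y != x) && P y] = Some v.
Proof.
rewrite /pick /enum_mem; set s := Finite.enum T => Pv vx.
have -> : [seq y <- s | (y != x) && P y] = [seq y <- [seq y <- s | P y] | y != x].
  exact: (filter_predI (predC1 x) P).
by case: [seq y <- s | P y] Pv => //= y r [->]; rewrite vx.
Qed.

Lemma forall_le_maxE (R : numDomainType) (T : finType) (C : {set T}) (F : T -> R) v :
  v \in C -> (forall u, u \in C -> F u <= F v) ->
  forall y, [forall u in C, F u <= F y] = (F v <= F y).
Proof.
move=> vC vmax y; apply/forallP/idP => [/(_ v)|Fvy u]; first by rewrite vC.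
by apply/implyP => uC; apply: le_trans (vmax u uC) Fvy.
Qed.

Lemma ler_cross_ratio (R : realFieldType) (a a' b b' : R) :
  0 < a' -> 0 < b -> 0 < b' -> a' / b' <= a / b -> b <= b' * a / a'.
Proof.
move=> a'_gt0 b_gt0 b'_gt0.
rewrite ler_pdivrMr // mulrAC ler_pdivlMr // => h.
by rewrite ler_pdivlMr // mulrC [b' * a]mulrC.
Qed.

Lemma omax_ge (R : realFieldType) (x b : R) o :
  b <= x \/ (exists2 y, o = Some y & b <= y) -> exists2 p, omax x o = Some p & b <= p.
Proof.
move=> witness; eexists; first reflexivity.
by case: witness => [b_le | [y -> b_le]]; [case: o => [y|] /= | ]; rewrite ?le_max ?b_le ?orbT.
Qed.

Lemma foldr_omax_ge (R : realFieldType) (T : eqType) (F : T -> R) base s b :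
  (exists2 x, x \in s & b <= F x) \/ (exists2 y, base = Some y & b <= y) ->
  exists2 p, foldr (fun x acc => omax (F x) acc) base s = Some p & b <= p.
Proof.
elim: s => [[[x //]|//]|x s IH] witness /=; apply: omax_ge.
case: witness => [[y]|base_witness]; last by right; apply: IH; right.
rewrite inE => /predU1P[-> | y_s] b_le; first by left.
by right; apply: IH; left; exists y.
Qed.

Section MTDMLIndividualRationality.
Variables (R : realFieldType) (V A : finType) (nT : nat).
Variable I : mt_input R V A nT.
Hypothesis w_prob : forall j u v, 0 <= w I j u v <= 1.
Hypothesis qual_ge0 : forall j a, 0 <= qual I j a.

Lemma prg_ge0 j g : 0 <= prg I j g.
Proof.
apply: prodr_ge0 => e _; have /andP[w_ge0 w_le1] := w_prob j e.1 e.2.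
by case: ifP; rewrite ?subr_ge0.
Qed.

Lemma reachS (g : {set V * V}) : {homo reach g : S T / S \subset T}.
Proof.
move=> S T /subsetP ST; apply/subsetP => x; rewrite !inE => /existsP[u /andP[uS ux]].
by apply/existsP; exists u; rewrite ST.
Qed.

Lemma SjS j : {homo Sj I ^~ j : S T / S \subset T}.
Proof.
move=> S T /subsetP ST; apply/subsetP => x; rewrite !inE => /andP[xS ->].
by rewrite ST.
Qed.

Lemma f_subset : {homo f I : S T / S \subset T >-> S <= T}.
Proof.
move=> S T ST; apply: ler_wpM2l; first by rewrite invr_ge0 ler0n.
apply: ler_sum => j _; apply: ler_sum => g _; apply: ler_wpM2l; first exact: prg_ge0.
by apply: ler_sum_subset => [x|]; [exact: qual_ge0 | exact/reachS/SjS].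
Qed.

Lemma marg_ge0 v S : 0 <= marg I v S.
Proof. by rewrite subr_ge0 f_subset ?subsetUr. Qed.

Lemma pickmaxP (C : {set V}) (F : V -> R) v :
  pickmax C F = Some v -> v \in C /\ forall u, u \in C -> F u <= F v.
Proof.
rewrite /pickmax; case: pickP => // y /andP[yC /forallP ymax] [<-]; split=> // u uC.
by have := ymax u; rewrite uC.
Qed.

Lemma pickmax_setD1 (C : {set V}) (F : V -> R) v x :
  pickmax C F = Some v -> v != x -> pickmax (C :\ x) F = Some v.
Proof.
move=> Pv vx; have [vC vmax] := pickmaxP Pv.
have vCx : v \in C :\ x by rewrite !inE vx.
have vmaxx u : u \in C :\ x -> F u <= F v by move=> /setD1P[_ /vmax].
rewrite /pickmax -(pick_predD1 Pv vx); apply: eq_pick => y /=.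
by rewrite (forall_le_maxE vCx vmaxx) (forall_le_maxE vC vmax) !inE andbA.
Qed.

Hypothesis bid_gt0 : forall v, v \in VR I -> 0 < bid I v.

Lemma cand_ge_bid vi v S : vi \in VR I -> v \in VR I -> marg I v S != 0 ->
  marg I v S / bid I v <= marg I vi S / bid I vi -> bid I vi <= cand I vi (v, S).
Proof.
move=> viVR vVR marg_neq0; apply: ler_cross_ratio; rewrite ?bid_gt0 //.
by rewrite lt_def marg_neq0 marg_ge0.
Qed.

Lemma win_loop_budget vi n (S : {set V}) sum :
  vi \notin S -> vi \in win_loop I n S sum -> sum + bid I vi <= budget I.
Proof.
elim: n S sum => [|n IH] S sum viS /=; first by rewrite (negPf viS).
have [_|_] := eqVneq S (VR I); first by rewrite (negPf viS).
case Pv: pickmax => [v|]; last by rewrite (negPf viS).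
have /setDP[vVR _] := (pickmaxP Pv).1.
case: ltP => [_|sum_le]; first by rewrite (negPf viS).
have [<- //|vvi] := eqVneq v vi.
have viS' : vi \notin v |: S by rewrite !inE negb_or eq_sym vvi.
move=> /(IH _ _ viS'); apply: le_trans.
by rewrite lerD2r lerDl ltW ?bid_gt0.
Qed.

Definition bid_covered vi (r : seq (V * {set V}) * R) :=
  (exists2 st, st \in r.1 & bid I vi <= cand I vi st) \/ r.2 + bid I vi <= budget I.

Lemma pay_loop_covered vi n (S : {set V}) sum :
  vi \notin S -> vi \in win_loop I n S sum ->
  all (fun st : V * {set V} => marg I st.1 st.2 != 0) (pay_loop I vi n S sum).1 ->
  bid_covered vi (pay_loop I vi n S sum).
Proof.
elim: n S sum => [|n IH] S sum viS /=; first by rewrite (negPf viS).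
have [_|_] := eqVneq S (VR I); first by rewrite (negPf viS).
case Pv: pickmax => [v|]; last by rewrite (negPf viS).
have [/setDP[vVR vS] vmax] := pickmaxP Pv.
case: ltP => [_|sum_le]; first by rewrite (negPf viS).
have [<- _|vvi win] := eqVneq v vi.
  case: ifP => _; first by right.
  case Pv': pickmax => [v'|]; last by right.
  have /setDP[/setD1P[_ v'VR] v'S] := (pickmaxP Pv').1.
  have covered l last : all (fun st : V * {set V} => marg I st.1 st.2 != 0) ((v', S) :: l) ->
      bid_covered v ((v', S) :: l, last).
    case/andP=> [marg_neq0 _]; left; exists (v', S); first exact: mem_head.
    by apply: cand_ge_bid => //; apply: vmax; rewrite inE v'S.
  by case: ltP => _; apply: covered.
have viS' : vi \notin v |: S by rewrite !inE negb_or eq_sym vvi.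
have -> : (S == VR I :\ vi) = false.
  by apply/negbTE/eqP => SE; move: vS; rewrite SE !inE vvi vVR.
have -> : (VR I :\ vi) :\: S = (VR I :\: S) :\ vi by apply/setP => x; rewrite !inE andbCA.
rewrite (pickmax_setD1 Pv vvi) ltNge (win_loop_budget viS' win) /= => /andP[_ all_rest].
case: (IH _ _ viS' win all_rest) => [[st st_in le_cand]|le_budget]; last by right.
by left; exists st; rewrite // inE st_in orbT.
Qed.

End MTDMLIndividualRationality.

Theorem lemma1 (R : realFieldType) (V A : finType) (nT : nat)
    (I : mt_input R V A nT) :
  (forall j u v, 0 <= w I j u v <= 1) ->
  (forall j a, 0 <= qual I j a) ->
  (forall v, v \in VR I -> 0 < bid I v) ->
  forall vi, vi \in winners I -> pay_welldef I vi ->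
  exists p : R, payment I vi = Some p /\ bid I vi <= p /\
    (forall c : R, bid I vi = c -> 0 <= p - c).
Proof.
move=> w_prob qual_ge0 bid_gt0 vi win welldef.
have covered := pay_loop_covered w_prob qual_ge0 bid_gt0 (negbT (in_set0 vi)) win welldef.
have [p pay_p bid_le_p] : exists2 p, payment I vi = Some p & bid I vi <= p.
  apply: foldr_omax_ge; case: covered => [cand_witness|le_budget]; first by left.
  by right; rewrite /pay_run le_budget; eexists; rewrite // lerBrDl.
by exists p; split=> //; split=> // c <-; rewrite subr_ge0.
Qed.
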